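(* For a prime $p\ge 5$ the following statements are equivalent: (i) $p$ is a Wolstenholme prime, i.e. $\binom{2p}{p}\equiv 2\pmod{p^4}$; (ii) for all nonnegative integers $n$ and $m$, $\binom{np}{mp}\equiv\binom{n}{m}\pmod{p^4}$; (iii) for all nonnegative integers $n,m,n_0,m_0$ with $n_0<p$ and $m_0<p$, $$\binom{np^4+n_0}{mp^4+m_0}\equiv\binom{n}{m}\binom{n_0}{m_0}\pmod{p^4}.$$
   Context: A prime $p$ is called a Wolstenholme prime if $\binom{2p-1}{p-1}\equiv 1\pmod{p^4}$, equivalently $\binom{2p}{p}\equiv 2\pmod{p^4}$. Binomial coefficients use the conventions $\binom{0}{0}=1$ and $\binom{l}{r}=0$ if $l<r$. *)

From mathcomp Require Import all_boot.
Set Implicit Arguments. Unset Strict Implicit. Unset Printing Implicit Defensive.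

Definition wolstenholme_prime (p : nat) : Prop :=
  prime p /\ 'C(2 * p, p) = 2 %[mod p ^ 4].

From mathcomp Require Import all_boot all_algebra.
From mathcomp Require Import ring zify.

(* Removing the multiples of p from (n p)! leaves a product of n blocks
   B(k) = prod_(0 < i < p) (k p + i).  Modulo p^4, B(y) is a polynomial of
   degree 3 in y p which is invariant under y |-> -1 - y, hence
   B(y) = B(0) (1 + b y (y + 1)) with b divisible by p^2, so b^2 = 0.
   Multiplying out gives C(n p, m p) = C(n, m) (1 + b n m (n - m)) mod p^4,
   and for n = 2, m = 1 this reads C(2p, p) = 2 + 4 b: Wolstenholme's
   congruence says exactly that b = 0.  Since b p^2 = 0 the same formula
   shows C(2 p^4, p^4) = C(2p, p) unconditionally, and a Lucas-type
   splitting of C(n p^4 + n0, m p^4 + m0) links (ii) and (iii). *)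

Set Implicit Arguments.
Unset Strict Implicit.
Unset Printing Implicit Defensive.

Import GRing.Theory.

Lemma fact_addn a b : (a + b)`! = a`! * \prod_(i < b) (a + i.+1).
Proof.
elim: b => [|b IHb]; first by rewrite addn0 big_ord0 muln1.
by rewrite big_ord_recr /= addnS factS IHb; ring.
Qed.

Definition pfree_fact (p n : nat) := \prod_(k < n) \prod_(i < p.-1) (k * p + i.+1).

Lemma fact_mulnp p n : 0 < p -> (n * p)`! = p ^ n * n`! * pfree_fact p n.
Proof.
move=> p_gt0; elim: n => [|n IHn]; first by rewrite mul0n /pfree_fact big_ord0.
rewrite mulSn addnC fact_addn IHn /pfree_fact big_ord_recr /= factS expnS.
rewrite -(prednK p_gt0) big_ord_recr /= prednK // -mulSnr.
ring.
Qed.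

Lemma bin_mulnp_pfree p m r : 0 < p ->
  'C(m + r, m) * pfree_fact p (m + r)
  = 'C((m + r) * p, m * p) * (pfree_fact p m * pfree_fact p r).
Proof.
move=> p_gt0.
have e1 := bin_fact (leq_addr r m); rewrite addKn in e1.
have e2 := bin_fact (leq_mul (leq_addr r m) (leqnn p)).
rewrite -mulnBl addKn !fact_mulnp // in e2.
have K_gt0 : 0 < p ^ (m + r) * (m`! * r`!) by rewrite !muln_gt0 expn_gt0 p_gt0 !fact_gt0.
apply/eqP; rewrite -(eqn_pmul2l K_gt0); apply/eqP.
rewrite -e1 in e2.
transitivity (p ^ (m + r) * ('C(m + r, m) * (m`! * r`!)) * pfree_fact p (m + r)); first ring.
by rewrite -e2 expnD; ring.
Qed.

Definition sum_pronic n := \sum_(k < n) k * k.+1.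

Lemma sum_pronicD m r : sum_pronic (m + r) = sum_pronic m + sum_pronic r + (m + r) * m * r.
Proof.
rewrite /sum_pronic; elim: r => [|r IHr]; first by rewrite addn0 big_ord0 !muln0 !addn0.
by rewrite addnS !big_ord_recr /= IHr; ring.
Qed.

Lemma pexp_dvd_bin p k N j : prime p -> p ^ k %| N -> ~~ (p %| j) -> p ^ k %| 'C(N, j).
Proof.
move=> p_pr dvdN; case: j => [|j] ndvd_j; first by rewrite dvdn0 in ndvd_j.
rewrite -(Gauss_dvdr _ (coprimeXl k (_ : coprime p j.+1))); last by rewrite prime_coprime.
by rewrite -mul_bin_diag dvdn_mulr.
Qed.

(* Only the term j = m p^k of the Vandermonde convolution survives:
   the other indices j with C(n0, m p^k + m0 - j) <> 0 lie within p of
   m p^k, hence are prime to p. *)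
Lemma bin_lucas_pexp p k n m n0 m0 : prime p -> 0 < k -> n0 < p -> m0 < p ->
  'C(n * p ^ k + n0, m * p ^ k + m0) = 'C(n * p ^ k, m * p ^ k) * 'C(n0, m0) %[mod p ^ k].
Proof.
move=> p_pr k_gt0 n0_lt m0_lt.
set N := n * p ^ k; set M := m * p ^ k.
have p_dvd_M : p %| M by rewrite dvdn_mull // dvdn_exp.
have M_lt : M < (M + m0).+1 by lia.
rewrite -binomial.Vandermonde (bigD1 (Ordinal M_lt)) //= addKn -modnDmr.
suff /eqP -> : p ^ k %| \sum_(j < (M + m0).+1 | j != Ordinal M_lt) 'C(N, j) * 'C(n0, M + m0 - j).
  by rewrite addn0.
apply: dvdn_sum => j ne_jM; rewrite -val_eqE /= in ne_jM.
have j_le := ltn_ord j; rewrite ltnS in j_le.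
have [n0_lt_j|] := ltnP n0 (M + m0 - j); first by rewrite (bin_small n0_lt_j) muln0.
move=> j_ge; apply: dvdn_mulr; apply: pexp_dvd_bin => //.
- exact: dvdn_mull.
- apply/negP => p_dvd_j.
  have [jM|Mj] := leqP j M.
    by have /dvdn_leq := dvdn_sub p_dvd_M p_dvd_j; lia.
  by have /dvdn_leq := dvdn_sub p_dvd_j p_dvd_M; lia.
Qed.

Lemma bin_mulnpX_mod p q : (forall n m, 'C(n * p, m * p) = 'C(n, m) %[mod q]) ->
  forall k n m, 'C(n * p ^ k, m * p ^ k) = 'C(n, m) %[mod q].
Proof.
move=> bin_mulnp; elim => [|k IHk] n m; first by rewrite expn0 !muln1.
by rewrite expnSr !mulnA bin_mulnp IHk.
Qed.

Lemma Zp_nat_eq q a b : 1 < q -> (a%:R = b%:R :> 'Z_q)%R <-> a = b %[mod q].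
Proof.
move=> q_gt1; split => [/(congr1 val) | e]; first by rewrite /= !val_Zp_nat.
by apply: val_inj; rewrite /= !val_Zp_nat.
Qed.

Local Open Scope ring_scope.

Lemma mul1D_sqr0 (R : comPzRingType) (b u v : R) :
  b * b = 0 -> (1 + b * u) * (1 + b * v) = 1 + b * (u + v).
Proof.
move=> bb; transitivity (1 + b * (u + v) + b * b * u * v); first ring.
by rewrite bb !mul0r addr0.
Qed.

Lemma prod_linear_cubic (R : comPzRingType) (q : R) (I : Type) (f : I -> R) (s : seq I) :
  q ^+ 4 = 0 -> exists a0 a1 a2 a3 : R, forall y,
    \prod_(i <- s) (y * q + f i)
    = a0 + a1 * q * y + a2 * q ^+ 2 * y ^+ 2 + a3 * q ^+ 3 * y ^+ 3.
Proof.
move=> q4; elim: s => [|i s [a0 [a1 [a2 [a3 IHs]]]]].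
  by exists 1, 0, 0, 0 => y; rewrite big_nil; ring.
exists (f i * a0), (a0 + f i * a1), (a1 + f i * a2), (a2 + f i * a3) => y.
rewrite big_cons IHs.
transitivity (f i * a0 + (a0 + f i * a1) * q * y + (a1 + f i * a2) * q ^+ 2 * y ^+ 2
  + (a2 + f i * a3) * q ^+ 3 * y ^+ 3 + a3 * q ^+ 4 * y ^+ 4); first ring.
by rewrite q4 mulr0 mul0r addr0.
Qed.

Lemma cubic_reflect_sym (R : comUnitRingType) (P : R -> R) (a0 a1 a2 a3 : R) :
  (6%:R : R) \is a GRing.unit ->
  (forall y, P y = a0 + a1 * y + a2 * y ^+ 2 + a3 * y ^+ 3) ->
  (forall y, P (-1 - y) = P y) ->
  forall y, P y = a0 + a2 * (y * (y + 1)).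
Proof.
move=> unit6 P_eq P_sym.
have := P_sym 0; have := P_sym 1; rewrite !P_eq.
move=> /eqP; rewrite -subr_eq0 => /eqP e1 /eqP; rewrite -subr_eq0 => /eqP e0.
have /subr0_eq a2_eq : a2 - (a1 + a3) = 0 by rewrite -e0; ring.
have a3_0 : a3 = 0.
  by apply: (mulrI unit6); rewrite mulr0 -oppr0 -e1 a2_eq; ring.
by move=> y; rewrite P_eq a2_eq a3_0; ring.
Qed.

Section WolstenholmeDefect.

Variable p : nat.
Hypotheses (p_pr : prime p) (p_ge5 : (5 <= p)%N).

Let p4_gt1 : (1 < p ^ 4)%N.
Proof. by rewrite -(exp1n 4) ltn_exp2r // prime_gt1. Qed.

Lemma natr_unit_small x : (0 < x < p)%N -> (x%:R : 'Z_(p ^ 4)) \is a GRing.unit.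
Proof.
move=> /andP[x_gt0 x_lt]; rewrite unitZpE // coprimeXl // prime_coprime //.
by apply/negP => /(dvdn_leq x_gt0); lia.
Qed.

Lemma natr_p_exp4 : (p%:R : 'Z_(p ^ 4)) ^+ 4 = 0.
Proof. by rewrite -natrX pchar_Zp. Qed.

Definition pblock (y : 'Z_(p ^ 4)) := \prod_(i < p.-1) (y * p%:R + (i.+1)%:R).

Lemma pblock_reflect y : pblock (-1 - y) = pblock y.
Proof.
have [p2|p_odd] := even_prime p_pr; first by have := p_ge5; lia.
rewrite /pblock [RHS](reindex_inj rev_ord_inj).
transitivity (\prod_(i < p.-1) - (y * p%:R + ((rev_ord i).+1)%:R)).
  apply: eq_bigr => i _; have i_lt := ltn_ord i.
  rewrite /= (_ : (p.-1 - i.+1).+1 = p - i.+1)%N; last by lia.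
  by rewrite natrB; [ring | lia].
have p_pred_even : odd p.-1 = false.
  by move: p_odd; rewrite -(prednK (prime_gt0 p_pr)) /= => /negbTE.
by rewrite prodrN card_ord -signr_odd p_pred_even mul1r.
Qed.

Lemma pblock0_unit : pblock 0 \is a GRing.unit.
Proof.
rewrite /pblock unitr_prod // => i _; rewrite mul0r add0r natr_unit_small //.
by have := ltn_ord i; lia.
Qed.

Lemma pblock_form :
  exists g, forall y, pblock y = pblock 0 * (1 + p%:R ^+ 2 * g * (y * (y + 1))).
Proof.
have [a0 [a1 [a2 [a3 pblock_cubic]]]] :=
  prod_linear_cubic (fun i : 'I_p.-1 => (i.+1)%:R) (index_enum _) natr_p_exp4.
have unit6 : (6%:R : 'Z_(p ^ 4)) \is a GRing.unit.
  by rewrite (natrM _ 2 3) unitrM !natr_unit_small //; lia.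
have pblockE := cubic_reflect_sym (P := pblock) unit6 pblock_cubic pblock_reflect.
have a0E : pblock 0 = a0 by rewrite pblockE mul0r mulr0 addr0.
exists (a2 / a0) => y; rewrite pblockE a0E.
have a0_unit : a0 \is a GRing.unit by rewrite -a0E pblock0_unit.
by rewrite -[in LHS](divrK a0_unit a2); ring.
Qed.

Section Defect.

Variable g : 'Z_(p ^ 4).
Hypothesis pblockE : forall y, pblock y = pblock 0 * (1 + p%:R ^+ 2 * g * (y * (y + 1))).
Let b := p%:R ^+ 2 * g.

Lemma defect_sqr : b * b = 0.
Proof.
transitivity (p%:R ^+ 4 * (g * g) : 'Z_(p ^ 4)); first by rewrite /b; ring.
by rewrite natr_p_exp4 mul0r.
Qed.

Lemma defect_mul_p2 x : b * (p ^ 2 * x)%:R = 0.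
Proof.
rewrite natrM natrX; transitivity (p%:R ^+ 4 * (g * x%:R) : 'Z_(p ^ 4)).
  by rewrite /b; ring.
by rewrite natr_p_exp4 mul0r.
Qed.

Lemma pfree_fact_Zp n :
  (pfree_fact p n)%:R = pblock 0 ^+ n * (1 + b * (sum_pronic n)%:R) :> 'Z_(p ^ 4).
Proof.
elim: n => [|n IHn].
  by rewrite /pfree_fact /sum_pronic !big_ord0 expr0 mulr0 addr0 mulr1.
have blockE : (\prod_(i < p.-1) (n * p + i.+1))%:R = pblock n%:R.
  by rewrite natr_prod; apply: eq_bigr => i _; rewrite natrD natrM.
rewrite /pfree_fact big_ord_recr /= natrM -/(pfree_fact p n) IHn blockE (pblockE n%:R).
rewrite /sum_pronic big_ord_recr /= -/(sum_pronic n) natrD.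
rewrite -(mul1D_sqr0 _ _ defect_sqr) natrM -natr1 [pblock 0 ^+ n.+1]exprS -/b; ring.
Qed.

Lemma bin_mulnp_Zp m r :
  'C((m + r) * p, m * p)%:R = 'C(m + r, m)%:R * (1 + b * ((m + r) * m * r)%:R)
    :> 'Z_(p ^ 4).
Proof.
set A := pblock 0.
have A_unit : A ^+ m * A ^+ r \is a GRing.unit by rewrite unitrM !unitrX //; exact: pblock0_unit.
have := congr1 (fun x => x%:R : 'Z_(p ^ 4)) (bin_mulnp_pfree m r (prime_gt0 p_pr)).
rewrite /= !natrM !pfree_fact_Zp sum_pronicD exprD !natrD.
set u := (sum_pronic m)%:R; set v := (sum_pronic r)%:R; set w := ((m + r) * m * r)%:R.
set C := 'C(m + r, m)%:R; set Cp := 'C((m + r) * p, m * p)%:R => e.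
have {}e : C * (1 + b * (u + v + w)) = Cp * (1 + b * (u + v)).
  apply: (mulrI A_unit); rewrite -(mul1D_sqr0 u v defect_sqr).
  transitivity (C * (A ^+ m * A ^+ r * (1 + b * (u + v + w)))); first ring.
  by rewrite e; ring.
transitivity (Cp * ((1 + b * (u + v)) * (1 + b * - (u + v)))).
  by rewrite mul1D_sqr0 ?defect_sqr // addrN mulr0 addr0 mulr1.
rewrite mulrA -e -mulrA mul1D_sqr0 ?defect_sqr //.
by congr (_ * (1 + b * _)); ring.
Qed.

End Defect.

Lemma bin_mulnp_mod_of_wolstenholme : 'C(2 * p, p) = 2 %[mod p ^ 4] ->
  forall n m, 'C(n * p, m * p) = 'C(n, m) %[mod p ^ 4].
Proof.
move=> wolst n m; have [g pblockE] := pblock_form.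
have two_unit : (2%:R : 'Z_(p ^ 4)) \is a GRing.unit by rewrite natr_unit_small //; lia.
have defect0 : p%:R ^+ 2 * g = 0.
  have := bin_mulnp_Zp pblockE 1 1; rewrite mul1n bin1 (_ : (1 + 1) * 1 * 1 = 2)%N //.
  move/(Zp_nat_eq _ _ p4_gt1): wolst => -> e.
  apply: (mulrI two_unit); apply: (mulrI two_unit); rewrite !mulr0.
  by transitivity (2%:R * (1 + p%:R ^+ 2 * g * 2%:R) - 2%:R : 'Z_(p ^ 4)); [ring | rewrite -e subrr].
have [mn|nm] := leqP m n; last by rewrite !bin_small // ltn_mul2r prime_gt0.
rewrite -(subnKC mn); apply/(Zp_nat_eq _ _ p4_gt1).
by rewrite (bin_mulnp_Zp pblockE) defect0 mul0r addr0 mulr1.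
Qed.

Lemma bin_double_pexp k : 'C(2 * p ^ k.+1, p ^ k.+1) = 'C(2 * p, p) %[mod p ^ 4].
Proof.
have [g pblockE] := pblock_form.
apply/(Zp_nat_eq _ _ p4_gt1); elim: k => [|k IHk]; first by rewrite expn1.
rewrite -IHk (expnSr p k.+1) !mulnA mul2n -addnn (bin_mulnp_Zp pblockE).
have -> : ((p ^ k.+1 + p ^ k.+1) * p ^ k.+1 * p ^ k.+1 = p ^ 2 * (2 * p * p ^ k * p ^ k * p ^ k))%N.
  by rewrite !expnS; ring.
by rewrite defect_mul_p2 addr0 mulr1 addnn -mul2n.
Qed.

End WolstenholmeDefect.

Local Close Scope ring_scope.

Theorem mainTheorem3 (p : nat) (hp : prime p) (hp5 : 5 <= p) :
  (wolstenholme_prime p <->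
     (forall n m : nat, 'C(n * p, m * p) = 'C(n, m) %[mod p ^ 4]))
  /\
  ((forall n m : nat, 'C(n * p, m * p) = 'C(n, m) %[mod p ^ 4]) <->
     (forall n m n0 m0 : nat, n0 < p -> m0 < p ->
        'C(n * p ^ 4 + n0, m * p ^ 4 + m0) = 'C(n, m) * 'C(n0, m0) %[mod p ^ 4])).
Proof.
have ii_of_i := bin_mulnp_mod_of_wolstenholme hp hp5.
have i_of_ii (h : forall n m, 'C(n * p, m * p) = 'C(n, m) %[mod p ^ 4]) :
    'C(2 * p, p) = 2 %[mod p ^ 4] by have := h 2 1; rewrite mul1n bin1.
have i_of_iii (h : forall n m n0 m0, n0 < p -> m0 < p ->
    'C(n * p ^ 4 + n0, m * p ^ 4 + m0) = 'C(n, m) * 'C(n0, m0) %[mod p ^ 4]) :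
    'C(2 * p, p) = 2 %[mod p ^ 4].
  have := h 2 1 0 0 (prime_gt0 hp) (prime_gt0 hp).
  by rewrite !addn0 mul1n bin1 bin0 muln1 (bin_double_pexp hp hp5 3).
split; split.
- by case=> _; exact: ii_of_i.
- by move=> h; split; [exact: hp | exact: i_of_ii].
- move=> h n m n0 m0 n0_lt m0_lt.
  by rewrite bin_lucas_pexp // -modnMml (bin_mulnpX_mod h 4) modnMml.
- by move=> h; exact/ii_of_i/i_of_iii.
Qed.
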